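(* Let $\omega$ be an attack cycle. For $k\ge 0$, the probability that $\omega$ is won by the attacker and $L(\omega)=k$ equals $\pi_k$. For $k\ge 2$, the probability that $\omega$ is won by the attacker and $L(\omega)\le k$ equals $pq^2+pq^2C_{k-2}(pq)$.
   Context: Honest hashrate $p$, attacker hashrate $q$, $p+q=1$, $0<q<p$. Attack cycles are words in S (attacker block) and H (honest block): H, SHS, SHH, or SSwH with $w$ a Dyck word over $\{S,H\}$ (S up-step, H down-step); with $|w|$ half the length of $w$: $\mathbb{P}[H]=p$, $\mathbb{P}[SHS]=pq^2$, $\mathbb{P}[SHH]=p^2q$, $\mathbb{P}[SSwH]=q^2p(pq)^{|w|}$. $L(\omega)$ is the number of blocks added to the official chain: $L(H)=1$, $L(SHS)=L(SHH)=2$, $L(SSwH)=|w|+2$. The cycle is won by the attacker if $\omega=SHS$ or $\omega$ starts with SS. $C_n=\frac{(2n)!}{n!(n+1)!}$ is the $n$-th Catalan number and $C_n(x)=\sum_{k=0}^nC_kx^k$. Set $\pi_0=\pi_1=0$ and for $k\ge2$, $\pi_k=pq^2\bigl(\mathbf 1_{k=2}+(pq)^{k-2}C_{k-2}\bigr)$. *)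

From HB Require Import structures.
From mathcomp Require Import all_boot all_order all_algebra.
From mathcomp Require Import all_classical all_reals all_analysis.
Set Implicit Arguments. Unset Strict Implicit. Unset Printing Implicit Defensive.
Import Order.TTheory GRing.Theory Num.Theory.
Import numFieldNormedType.Exports.
Local Open Scope classical_set_scope.
Local Open Scope ring_scope.

(* Blocks: S (attacker) = true, H (honest) = false. Words are seq bool. *)
Definition S : bool := true.
Definition H : bool := false.

Fixpoint dyck_from (h : nat) (w : seq bool) : bool :=
  match w with
  | [::] => h == 0%N
  | b :: w' => if b then dyck_from h.+1 w'
               else if h is h'.+1 then dyck_from h' w' else false
  end.
Definition dyck (w : seq bool) : bool := dyck_from 0 w.

Definition inner (om : seq bool) : seq bool := take (size om - 3) (drop 2 om).

Definition is_SSwH (om : seq bool) : bool :=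
  [&& (2 < size om)%N, take 2 om == [:: S; S], last S om == H & dyck (inner om)].

Definition is_cycle (om : seq bool) : bool :=
  [|| om == [:: H], om == [:: S; H; S], om == [:: S; H; H] | is_SSwH om].

Definition half_len (w : seq bool) : nat := (size w)./2.

Definition cycle_prob {R : realType} (p q : R) (om : seq bool) : R :=
  if om == [:: H] then p
  else if om == [:: S; H; S] then p * q ^+ 2
  else if om == [:: S; H; H] then p ^+ 2 * q
  else q ^+ 2 * p * (p * q) ^+ half_len (inner om).

(* L(om): number of blocks added to the official chain *)
Definition Lblocks (om : seq bool) : nat :=
  if om == [:: H] then 1%N
  else if om == [:: S; H; S] then 2%N
  else if om == [:: S; H; H] then 2%N
  else (half_len (inner om) + 2)%N.

Definition won (om : seq bool) : bool :=
  (om == [:: S; H; S]) || (take 2 om == [:: S; S]).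

(* Probability of the event E (a set of attack cycles): the countable sum of
   the probabilities of the cycles in E, enumerated by length n.
   prob_term p q E n = total probability of the cycles of length n in E. *)
Definition prob_term {R : realType} (p q : R) (E : pred (seq bool)) (n : nat) : R :=
  \sum_(t : n.-tuple bool | is_cycle t && E t) cycle_prob p q t.

Definition prob_event_is {R : realType} (p q : R) (E : pred (seq bool)) (l : R) : Prop :=
  (fun N => \sum_(0 <= n < N) prob_term p q E n) @ \oo --> l.

Definition catalan {R : realType} (n : nat) : R :=
  ((2 * n)`!)%:R / ((n`!)%:R * ((n.+1)`!)%:R).
Definition catalan_poly {R : realType} (n : nat) (x : R) : R :=
  \sum_(k < n.+1) catalan k * x ^+ k.

Definition pi_k {R : realType} (p q : R) (k : nat) : R :=
  if (k < 2)%N then 0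
  else p * q ^+ 2 * ((k == 2%N)%:R + (p * q) ^+ (k - 2) * catalan (k - 2)).

From HB Require Import structures.
From mathcomp Require Import all_boot all_order all_algebra.
From mathcomp Require Import all_classical all_reals all_analysis.
From mathcomp Require Import zify ring.
Set Implicit Arguments.
Unset Strict Implicit.
Unset Printing Implicit Defensive.
Import Order.TTheory GRing.Theory Num.Theory.
Local Open Scope ring_scope.

(* A cycle won by the attacker is either SHS, with L = 2, or S S w H with w a
   Dyck word, with L = |w| + 2 and probability q^2 p (pq)^|w|; in both cases
   its length is 2L - 1.  The Dyck words of length 2j are counted by the ballot
   recurrence, which gives C_j.  Hence every event {won, L in P} with P finite
   only involves finitely many cycle lengths: the partial sums of its
   probability series are eventually constant, so no hypothesis on p and q is
   needed. *)

Section TupleSums.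
Variables (T : finType) (V : nmodType).
Implicit Type F : seq T -> V.

Lemma big_tuple_cons n F :
  \sum_(t : n.+1.-tuple T) F t = \sum_(x : T) \sum_(t : n.-tuple T) F (x :: t).
Proof.
rewrite pair_big /= (reindex (fun xt : T * n.-tuple T => [tuple of xt.1 :: xt.2])) //=.
exists (fun t : n.+1.-tuple T => (thead t, [tuple of behead t])).
  by move=> [x t] _; congr pair; apply: val_inj.
by move=> t _; rewrite [in RHS](tuple_eta t).
Qed.

Lemma big_tuple_rev n F :
  \sum_(t : n.-tuple T) F t = \sum_(t : n.-tuple T) F (rev t).
Proof.
rewrite (reindex_inj (h := fun t : n.-tuple T => [tuple of rev t])) //.
by move=> t1 t2 /(congr1 val) /(congr1 rev); rewrite !revK => /val_inj.
Qed.

Lemma big_tuple_rcons n F :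
  \sum_(t : n.+1.-tuple T) F t = \sum_(x : T) \sum_(t : n.-tuple T) F (rcons t x).
Proof.
rewrite big_tuple_rev (big_tuple_cons _ (F \o rev)); apply: eq_bigr => x _.
rewrite (big_tuple_rev _ (F \o rev \o cons x)).
by apply: eq_bigr => t _; rewrite /= rev_cons revK.
Qed.

Lemma big_tuple0 F : \sum_(t : 0.-tuple T) F t = F [::].
Proof.
rewrite (eq_bigr (fun=> F [::])) => [|t _]; last by rewrite tuple0.
by rewrite sumr_const card_tuple.
Qed.

Lemma big_tuple_eq n (s : seq T) (x : V) :
  \sum_(t : n.-tuple T | val t == s) x = x *+ (size s == n).
Proof.
have [sz_s|sz_s] := eqVneq (size s) n; last first.
  by rewrite big_pred0 // => t; apply: contra_neqF sz_s => /eqP <-; rewrite size_tuple.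
by rewrite (big_pred1 (Tuple (introT eqP sz_s))) // => t; rewrite -val_eqE.
Qed.

End TupleSums.

Lemma big_even_half (V : nmodType) m (f : nat -> V) :
  \sum_(0 <= i < m | ~~ odd i) f i./2 = \sum_(0 <= j < uphalf m) f j.
Proof.
elim: m => [|m IHm]; first by rewrite !big_geq.
rewrite big_mkcond big_nat_recr //= -big_mkcond IHm uphalfE /= uphalf_half.
by case: (odd m); rewrite /= ?addr0 // big_nat_recr.
Qed.

Definition dyck_count (h n : nat) : nat := \sum_(t : n.-tuple bool) dyck_from h t.

Lemma dyck_count0 h : dyck_count h 0 = (h == 0)%N.
Proof. by rewrite /dyck_count (big_tuple0 (fun t => nat_of_bool (dyck_from h t))). Qed.

Lemma dyck_countS h n :
  dyck_count h n.+1 = (dyck_count h.+1 n + if h is h'.+1 then dyck_count h' n else 0)%N.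
Proof.
rewrite /dyck_count (big_tuple_cons _ (fun t => nat_of_bool (dyck_from h t))) big_bool /=.
by case: h => [|h] //=; rewrite big1_eq.
Qed.

Lemma dyck_count_gt n h : (n < h)%N -> dyck_count h n = 0%N.
Proof.
elim: n h => [|n IHn] [|h] //= lt_nh; first by rewrite dyck_count0.
by rewrite dyck_countS !IHn //; lia.
Qed.

Lemma dyck_count_odd n h : odd (n + h) -> dyck_count h n = 0%N.
Proof.
elim: n h => [|n IHn] h; first by case: h => [|h] //; rewrite dyck_count0.
rewrite dyck_countS addSn => /= odd_nh; rewrite IHn ?addnS //.
by case: h odd_nh => [|h] //; rewrite addnS /= negbK => /IHn ->.
Qed.

(* The [if] stands for 'C(n, u - 1), which has to vanish at u = 0. *)
Lemma dyck_count_ballot n u d : (u + d)%N = n -> (u <= d)%N ->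
  (dyck_count (d - u) n + if u is u'.+1 then 'C(n, u') else 0)%N = 'C(n, u).
Proof.
elim: n u d => [|n IHn] u d def_n le_ud.
  have [-> ->] : u = 0%N /\ d = 0%N by lia.
  by rewrite dyck_count0.
case: u def_n le_ud => [|u] def_n le_ud.
  have -> : d = n.+1 by lia.
  rewrite subn0 dyck_countS dyck_count_gt // add0n addn0 bin0.
  by have := IHn 0%N n erefl isT; rewrite subn0 addn0 bin0.
have binSl : 'C(n.+1, u) = ('C(n, u) + if u is u'.+1 then 'C(n, u') else 0)%N.
  by case: (u) => [|u']; rewrite ?bin0.
have IHud := IHn u d ltac:(lia) ltac:(lia).
rewrite dyck_countS (_ : (d - u.+1).+1 = d - u)%N ?binSl ?binS; last by lia.
have [eq_d|lt_ud] := eqVneq d u.+1.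
  have sym_bin : 'C(n, u.+1) = 'C(n, u).
    by rewrite -[in LHS]bin_sub; [congr binomial|]; lia.
  by subst d; rewrite subnn /=; lia.
have := IHn u.+1 d.-1; rewrite (_ : (d - u.+1)%N = (d.-1 - u.+1).+1); last by lia.
lia.
Qed.

Lemma dyck_count_catalan j : (j.+1 * dyck_count 0 j.*2)%N = 'C(j.*2, j).
Proof.
have := dyck_count_ballot (addnn j) (leqnn j); rewrite subnn.
case: j => [|j]; first by rewrite mul1n bin0 addn0 => <-.
have := mul_bin_left j.+1.*2 j; rewrite (_ : (j.+1.*2 - j = j.+2)%N); last by lia.
nia.
Qed.

Lemma catalan_dyck_count (R : realType) j : catalan j = (dyck_count 0 j.*2)%:R :> R.
Proof.
have le_j_2j : (j <= j.*2)%N by rewrite -addnn leq_addr.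
have fact_neq0 : j`!%:R != 0 :> R by rewrite pnatr_eq0 -lt0n fact_gt0.
rewrite /catalan mul2n -(bin_fact le_j_2j) -{2}addnn addnK -dyck_count_catalan factS.
by rewrite !natrM; field; rewrite fact_neq0 addrC natr1 pnatr_eq0.
Qed.

Lemma won_cycle_size om : is_cycle om -> won om -> (3 <= size om)%N.
Proof. by case/or4P=> [/eqP->|/eqP->|/eqP->|/and4P[]]. Qed.

Lemma inner_SS w b : inner [:: S, S & rcons w b] = w.
Proof.
by rewrite /inner /= size_rcons subSS subSS subSS subn0 drop0 -cats1 take_size_cat.
Qed.

Lemma cycle_won_SH t : is_cycle [:: S, H & t] && won [:: S, H & t] = (t == [:: S]).
Proof. by case: t => [|[] []]. Qed.

Lemma is_cycle_SS w b : is_cycle [:: S, S & rcons w b] = ~~ b && dyck w.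
Proof.
by rewrite /is_cycle /is_SSwH /= size_rcons last_rcons inner_SS take0 eqxx; case: b.
Qed.

Lemma won_SS t : won [:: S, S & t].
Proof. by rewrite /won /= take0. Qed.

Lemma Lblocks_SS w b : Lblocks [:: S, S & rcons w b] = (half_len w).+2.
Proof. by rewrite /Lblocks /= inner_SS addn2. Qed.

Lemma cycle_prob_SS (R : realType) (p q : R) w b :
  cycle_prob p q [:: S, S & rcons w b] = q ^+ 2 * p * (p * q) ^+ half_len w.
Proof. by rewrite /cycle_prob /= inner_SS. Qed.

Section WonCyclesByBlocks.
Variables (R : realType) (p q : R) (P : pred nat).

Definition won_blocks_weight (om : seq bool) : R :=
  if is_cycle om && (won om && P (Lblocks om)) then cycle_prob p q om else 0.

Lemma prob_term_won_blocksE n :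
  prob_term p q (fun om => won om && P (Lblocks om)) n =
  \sum_(t : n.-tuple bool) won_blocks_weight t.
Proof. by rewrite /prob_term big_mkcond. Qed.

Lemma prob_term_won_blocks_small n : (n < 3)%N ->
  prob_term p q (fun om => won om && P (Lblocks om)) n = 0.
Proof.
move=> lt_n3; rewrite /prob_term big_pred0 // => t.
apply/negP => /and3P[cyc_t won_t _].
by have := won_cycle_size cyc_t won_t; rewrite size_tuple; lia.
Qed.

Lemma won_blocks_weight_H t : won_blocks_weight (H :: t) = 0.
Proof. by rewrite /won_blocks_weight /won /= andbF. Qed.

Lemma won_blocks_weight_SH t :
  won_blocks_weight [:: S, H & t] =
  if t == [:: S] then (P 2%N)%:R * (p * q ^+ 2) else 0.
Proof.
rewrite /won_blocks_weight andbA cycle_won_SH.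
by case: eqP => [->|_] //; case: (P 2); rewrite ?mul1r ?mul0r.
Qed.

Lemma won_blocks_weight_SS w b :
  won_blocks_weight [:: S, S & rcons w b] =
  [&& ~~ b, dyck w & P (half_len w).+2]%:R * (q ^+ 2 * p * (p * q) ^+ half_len w).
Proof.
rewrite /won_blocks_weight is_cycle_SS won_SS Lblocks_SS cycle_prob_SS /= -andbA.
by case: [&& _, _ & _]; rewrite ?mul1r ?mul0r.
Qed.

Lemma prob_term_won_blocks m :
  prob_term p q (fun om => won om && P (Lblocks om)) m.+3 =
  ((m == 0%N) && P 2%N)%:R * (p * q ^+ 2) +
  (dyck_count 0 m * P m./2.+2)%:R * (q ^+ 2 * p * (p * q) ^+ m./2).
Proof.
rewrite prob_term_won_blocksE big_tuple_cons big_bool /=.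
rewrite [X in _ + X]big1 => [|t _]; last exact: won_blocks_weight_H.
rewrite addr0 (big_tuple_cons _ (fun t => won_blocks_weight (S :: t))) big_bool /=.
rewrite addrC; congr (_ + _).
  under eq_bigr do rewrite won_blocks_weight_SH.
  rewrite -big_mkcond big_tuple_eq /= eqSS eq_sym.
  by case: (m == 0%N); case: (P 2); rewrite /= ?mul1r ?mul0r.
rewrite (big_tuple_rcons _ (fun t => won_blocks_weight [:: S, S & t])) big_bool /=.
rewrite [X in X + _]big1 => [|w _]; last by rewrite won_blocks_weight_SS mul0r.
under eq_bigr => w _ do rewrite won_blocks_weight_SS /half_len size_tuple.
rewrite add0r -mulr_suml /dyck_count; congr (_ * _).
rewrite natrM natr_sum mulr_suml; apply: eq_bigr => w _.
by rewrite -natrM /dyck; case: dyck_from; case: (P _).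
Qed.

Lemma sum_prob_term_won_blocks m :
  \sum_(0 <= n < m.+3) prob_term p q (fun om => won om && P (Lblocks om)) n =
  ((0 < m)%N && P 2)%:R * (p * q ^+ 2) +
  \sum_(0 <= j < uphalf m | P j.+2) catalan j * (q ^+ 2 * p * (p * q) ^+ j).
Proof.
rewrite big_nat_recl // big_nat_recl // big_nat_recl //.
rewrite !prob_term_won_blocks_small // !add0r.
under eq_bigr do rewrite prob_term_won_blocks.
rewrite big_split /=; congr (_ + _).
  rewrite -mulr_suml; congr (_ * _).
  case: m => [|m]; first by rewrite big_geq.
  by rewrite big_nat_recl // big1 ?addr0.
rewrite [RHS]big_mkcond -big_even_half [RHS]big_mkcond; apply: eq_bigr => i _.
case: ifPn => [even_i|]; last first.
  by rewrite negbK => odd_i; rewrite dyck_count_odd ?addn0 // mul0r.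
have def_i : (i./2).*2 = i by rewrite -[RHS]odd_double_half (negbTE even_i).
rewrite natrM -{1}def_i -catalan_dyck_count.
by case: (P _); rewrite /= ?mulr1 ?mulr0 ?mul0r.
Qed.

Lemma prob_event_won_blocks J : (forall x, P x -> x < J.+2)%N ->
  prob_event_is p q (fun om => won om && P (Lblocks om))
    ((P 2%N)%:R * (p * q ^+ 2) +
     \sum_(0 <= j < J | P j.+2) catalan j * (q ^+ 2 * p * (p * q) ^+ j)).
Proof.
move=> P_lt; apply: cvg_near_cst; exists (J.*2 + 4)%N => // N /= le_N.
have -> : N = (N - 3).+3 by lia.
rewrite sum_prob_term_won_blocks (_ : (0 < N - 3)%N) //; last by lia.
congr (_ + _); rewrite (@big_nat_widen _ _ _ 0 J (uphalf (N - 3))); last first.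
  by rewrite -(uphalf_double J) uphalf_leq //; lia.
apply: eq_bigl => j; case P_j: (P j.+2) => //=.
by have := P_lt _ P_j; rewrite ltnS.
Qed.

End WonCyclesByBlocks.

Lemma pi_kE (R : realType) (p q : R) k :
  pi_k p q k = (2 == k)%:R * (p * q ^+ 2) +
    \sum_(0 <= j < k.-1 | j.+2 == k) catalan j * (q ^+ 2 * p * (p * q) ^+ j).
Proof.
case: k => [|[|k]]; rewrite /pi_k; try by rewrite big_geq ?mul0r ?addr0.
under eq_bigl => j do rewrite eqSS.
by rewrite big_nat1_eq /= subSS subSS subn0 leqnn eq_sym; ring.
Qed.

Lemma catalan_polyE (R : realType) (p q : R) k : (2 <= k)%N ->
  p * q ^+ 2 + p * q ^+ 2 * catalan_poly (k - 2) (p * q) =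
  (2 <= k)%N%:R * (p * q ^+ 2) +
    \sum_(0 <= j < k.-1 | (j.+2 <= k)%N) catalan j * (q ^+ 2 * p * (p * q) ^+ j).
Proof.
move=> le2k; rewrite le2k mul1r /catalan_poly.
rewrite -(big_mkord xpredT (fun j => catalan j * (p * q) ^+ j)) mulr_sumr.
rewrite big_nat_cond [in RHS]big_nat_cond (_ : (k - 2).+1 = k.-1); last by lia.
congr (_ + _); apply: eq_big => [j|j _]; last by ring.
by rewrite andbT; case: ltnP => //= lt_j; apply/esym/idP; lia.
Qed.

Theorem lemma1 (R : realType) (p q : R) (hq : 0 < q) (hqp : q < p) (hpq : p + q = 1) :
  (forall k : nat,
     prob_event_is p q (fun om => won om && (Lblocks om == k)) (pi_k p q k)) /\
  (forall k : nat, (2 <= k)%N ->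
     prob_event_is p q (fun om => won om && (Lblocks om <= k)%N)
       (p * q ^+ 2 + p * q ^+ 2 * catalan_poly (k - 2) (p * q))).
Proof.
split=> [k|k le2k].
  rewrite pi_kE; apply: (prob_event_won_blocks (P := fun x => x == k) (J := k.-1)).
  by move=> x /eqP ->; lia.
rewrite catalan_polyE //.
apply: (prob_event_won_blocks (P := fun x => (x <= k)%N) (J := k.-1)).
by move=> x; lia.
Qed.
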